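(* (Label weakening.) In DCC, if $\Delta;\Gamma\vdash M:C$, $\Delta;\overline x{:}\overline A,x{:}A\vdash N:B$, and the label $\ell_i$ does not occur in $\Delta$, then $\Delta,\ell_i(\{\overline x{:}\overline A\},x{:}A\mapsto N:B);\Gamma\vdash M:C$.
   Context: DCC: expressions $A,B,L,M,N::=x\mid U_i\mid\Pi x{:}A.B\mid L@M\mid\ell_i\{\overline M\}$, where $\ell_i$ are label names disjoint from variables and $\overline M=M_1,\dots,M_n$ ($n\ge0$). Type contexts $\Gamma::=\cdot\mid\Gamma,x{:}A$; label contexts $\Delta::=\cdot\mid\Delta,\ell_i(\{\overline x{:}\overline A\},x{:}A\mapsto M:B)$ (free-variable telescope $\overline x{:}\overline A$, argument, body, result type). Substitution standard with $\ell\{\overline M\}[N/x]=\ell\{\overline{M[N/x]}\}$. Reduction: $\Delta\vdash\ell\{\overline M\}@N\triangleright L[\overline M/\overline x,N/x]$ when $\ell(\{\overline x{:}\overline A\},x{:}A\mapsto L:B)\in\Delta$. Equivalence $\Delta\vdash M\equiv N$: common reduct, or the $\eta$-rule ($\Delta\vdash L\triangleright^*\ell\{\overline N\}$, $\Delta\vdash M\triangleright^*M'$, $\ell(\{\overline x{:}\overline A\},x{:}A\mapsto N:B)\in\Delta$, $\Delta\vdash N[\overline N/\overline x]\equiv M'@x$ give $\Delta\vdash L\equiv M$) and its symmetric version. Typing $\Delta;\Gamma\vdash M:A$ and formation $\vdash\Delta;\Gamma$ (mutual): variables from a well-formed context, $U_i:U_{i+1}$, $\Pi x{:}A.B:U_{\max(i,j)}$,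 $M@N:B[N/x]$ when $M:\Pi x{:}A.B$ and $N:A$, conversion along $\equiv$ to a type $B:U_i$, and: if $\vdash\Delta;\Gamma$, $\ell(\{\overline x{:}\overline A\},x{:}A\mapsto M:B)\in\Delta$, $|\overline M|=|\overline x|$ and $\Delta;\Gamma\vdash M_k:A_k[M_1/x_1,\dots,M_{k-1}/x_{k-1}]$ for all $k$, then $\Delta;\Gamma\vdash\ell\{\overline M\}:\Pi x{:}A[\overline M/\overline x].B[\overline M/\overline x]$. Formation: $\vdash\cdot;\cdot$; fresh label entries may be added when $\Delta;\overline x{:}\overline A\vdash\Pi x{:}A.B:U_i$ and $\Delta;\overline x{:}\overline A,x{:}A\vdash M:B$; $\vdash\Delta;\Gamma$ and $\Delta;\Gamma\vdash A:U_i$ give $\vdash\Delta;\Gamma,x{:}A$. *)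

(* Conventions:
   - [Var n] is the de Bruijn index n (0 = most recently bound variable).
   - Contexts (type contexts Gamma and label telescopes xs:As) are lists whose
     HEAD is the most recently bound variable: "Gamma, x:A" is [A :: Gamma].
     Each type in a context lives in the context formed by the entries
     after it in the list.
   - In a closure [Lab l Ms], the list [Ms] = [M_1; ...; M_n] is in natural
     (left-to-right) order.
   - A label entry  l({xs:As}, x:A |-> M : B)  is [LEntry l tele A M B] where
     [tele] is the telescope as a context (head = A_n), [A] lives in [tele],
     and [M], [B] live in [A :: tele]. *)
From Stdlib Require Import List Arith.
Import ListNotations.

Inductive term : Type :=
| Var  (n : nat)
| Univ (i : nat)
| Pi   (A B : term)            (* Pi x:A. B ; B binds index 0 *)
| App  (M N : term)
| Lab  (l : nat) (Ms : list term).

Definition upren (xi : nat -> nat) : nat -> nat :=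
  fun n => match n with 0 => 0 | S n => S (xi n) end.

Fixpoint ren (xi : nat -> nat) (t : term) : term :=
  match t with
  | Var n => Var (xi n)
  | Univ i => Univ i
  | Pi A B => Pi (ren xi A) (ren (upren xi) B)
  | App M N => App (ren xi M) (ren xi N)
  | Lab l Ms => Lab l (map (ren xi) Ms)
  end.

Definition lift (k : nat) (t : term) : term := ren (fun n => k + n) t.

Definition up (sigma : nat -> term) : nat -> term :=
  fun n => match n with 0 => Var 0 | S n => lift 1 (sigma n) end.

Fixpoint subst (sigma : nat -> term) (t : term) : term :=
  match t with
  | Var n => sigma n
  | Univ i => Univ i
  | Pi A B => Pi (subst sigma A) (subst (up sigma) B)
  | App M N => App (subst sigma M) (subst sigma N)
  | Lab l Ms => Lab l (map (subst sigma) Ms)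
  end.

Definition subst1 (N : term) : nat -> term :=
  fun n => match n with 0 => N | S n => Var n end.

(* instantiation of the variables of a context by a list given
   most-recent-first: index k |-> k-th element, remaining indices shifted *)
Definition inst_rev (Ms : list term) : nat -> term :=
  fun k => nth k Ms (Var (k - length Ms)).

(* [M_1..M_n / x_1..x_n] for a telescope xs, Ms in natural order *)
Definition inst (Ms : list term) : nat -> term := inst_rev (rev Ms).

(* [M_1..M_n / x_1..x_n, N / x] for the context  xs, x *)
Definition inst_arg (Ms : list term) (N : term) : nat -> term :=
  inst_rev (N :: rev Ms).

Inductive lentry : Type :=
| LEntry (l : nat) (tele : list term) (A : term) (M : term) (B : term).

Definition l_name (e : lentry) : nat := let 'LEntry l _ _ _ _ := e in l.

Definition ldelta := list lentry.

Fixpoint lookup (D : ldelta) (l : nat) : option lentry :=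
  match D with
  | [] => None
  | e :: D' => if Nat.eqb (l_name e) l then Some e else lookup D' l
  end.

Definition declared (D : ldelta) (l : nat) : Prop := In l (map l_name D).

Inductive step (D : ldelta) : term -> term -> Prop :=
| step_beta : forall l tele A L B Ms N,
    lookup D l = Some (LEntry l tele A L B) ->
    length Ms = length tele ->
    step D (App (Lab l Ms) N) (subst (inst_arg Ms N) L)
| step_piL : forall A A' B, step D A A' -> step D (Pi A B) (Pi A' B)
| step_piR : forall A B B', step D B B' -> step D (Pi A B) (Pi A B')
| step_appL : forall M M' N, step D M M' -> step D (App M N) (App M' N)
| step_appR : forall M N N', step D N N' -> step D (App M N) (App M N')
| step_lab : forall l Ms Ms', step_list D Ms Ms' -> step D (Lab l Ms) (Lab l Ms')
with step_list (D : ldelta) : list term -> list term -> Prop :=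
| step_list_hd : forall M M' Ms, step D M M' -> step_list D (M :: Ms) (M' :: Ms)
| step_list_tl : forall M Ms Ms', step_list D Ms Ms' -> step_list D (M :: Ms) (M :: Ms').

Inductive red (D : ldelta) : term -> term -> Prop :=
| red_refl : forall M, red D M M
| red_step : forall M N L, step D M N -> red D N L -> red D M L.

Inductive equiv (D : ldelta) : term -> term -> Prop :=
| equiv_red : forall M N L, red D M L -> red D N L -> equiv D M N
| equiv_eta : forall L M M' l Ns tele A Nb B,
    red D L (Lab l Ns) ->
    red D M M' ->
    lookup D l = Some (LEntry l tele A Nb B) ->
    length Ns = length tele ->
    (* N[Ns/xs] == M' @ x, with x the (fresh) variable bound at index 0 *)
    equiv D (subst (up (inst Ns)) Nb) (App (lift 1 M') (Var 0)) ->
    equiv D L M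
| equiv_eta_sym : forall L M M' l Ns tele A Nb B,
    red D L (Lab l Ns) ->
    red D M M' ->
    lookup D l = Some (LEntry l tele A Nb B) ->
    length Ns = length tele ->
    equiv D (App (lift 1 M') (Var 0)) (subst (up (inst Ns)) Nb) ->
    equiv D M L.

(* typing  D;G |- M : A ,  formation  |- D;G , and the argument judgement
   for closures (args are given most-recent-first, matching the telescope). *)
Inductive typing : ldelta -> list term -> term -> term -> Prop :=
| ty_var : forall D G n A,
    wf D G -> nth_error G n = Some A ->
    typing D G (Var n) (lift (S n) A)
| ty_univ : forall D G i,
    wf D G -> typing D G (Univ i) (Univ (S i))
| ty_pi : forall D G A B i j,
    typing D G A (Univ i) -> typing D (A :: G) B (Univ j) ->
    typing D G (Pi A B) (Univ (Nat.max i j))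
| ty_app : forall D G M N A B,
    typing D G M (Pi A B) -> typing D G N A ->
    typing D G (App M N) (subst (subst1 N) B)
| ty_conv : forall D G M A B i,
    typing D G M A -> typing D G B (Univ i) -> equiv D A B ->
    typing D G M B
| ty_lab : forall D G l tele A Mb B Ms,
    wf D G ->
    lookup D l = Some (LEntry l tele A Mb B) ->
    args_typed D G (rev Ms) tele ->
    typing D G (Lab l Ms) (Pi (subst (inst Ms) A) (subst (up (inst Ms)) B))
with wf : ldelta -> list term -> Prop :=
| wf_empty : wf [] []
| wf_label : forall D l tele A M B i,
    ~ declared D l ->
    typing D tele (Pi A B) (Univ i) ->
    typing D (A :: tele) M B ->
    wf (LEntry l tele A M B :: D) []
| wf_var : forall D G A i,
    wf D G -> typing D G A (Univ i) -> wf D (A :: G)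
with args_typed : ldelta -> list term -> list term -> list term -> Prop :=
| args_nil : forall D G, args_typed D G [] []
| args_cons : forall D G M Ms A tele,
    args_typed D G Ms tele ->
    typing D G M (subst (inst_rev Ms) A) ->
    args_typed D G (M :: Ms) (A :: tele).

(* Every lookup in D is unchanged in D extended by a fresh label, so reduction, equivalence
   and hence whole derivations transfer to the extended environment.  The real content is
   that the extended environment is well formed: the rule for adding a label needs
   Pi x:A.B to be a type, whereas the hypothesis only gives N : B.  This is validity of
   typing (every type of a term is itself typed), proved from the renaming and
   substitution lemmas; for closures it also uses that the entries of a well-formed
   label environment are well typed. *)
From Stdlib Require Import List Arith Lia.
Import ListNotations.

Fixpoint term_ind_list (P : term -> Prop)
  (HV : forall n, P (Var n)) (HU : forall i, P (Univ i))
  (HP : forall A B, P A -> P B -> P (Pi A B))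
  (HA : forall M N, P M -> P N -> P (App M N))
  (HL : forall l Ms, (forall M, In M Ms -> P M) -> P (Lab l Ms)) (t : term) : P t :=
  match t with
  | Var n => HV n
  | Univ i => HU i
  | Pi A B => HP A B (term_ind_list P HV HU HP HA HL A) (term_ind_list P HV HU HP HA HL B)
  | App M N => HA M N (term_ind_list P HV HU HP HA HL M) (term_ind_list P HV HU HP HA HL N)
  | Lab l Ms => HL l Ms (proj1 (Forall_forall P Ms) ((fix go (Ms : list term) : Forall P Ms :=
       match Ms with
       | [] => Forall_nil _
       | M :: Ms' => Forall_cons _ (term_ind_list P HV HU HP HA HL M) (go Ms')
       end) Ms))
  end.

Fixpoint scoped (n : nat) (t : term) : Prop :=
  match t with
  | Var k => k < n
  | Univ _ => True
  | Pi A B => scoped n A /\ scoped (S n) B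
  | App M N => scoped n M /\ scoped n N
  | Lab _ Ms => (fix go (Ms : list term) : Prop :=
       match Ms with [] => True | M :: Ms' => scoped n M /\ go Ms' end) Ms
  end.

Lemma scoped_Lab n l Ms : scoped n (Lab l Ms) <-> (forall M, In M Ms -> scoped n M).
Proof.
  simpl. induction Ms as [|M Ms IH]; simpl; [tauto|].
  rewrite IH. split; [intros [? ?] ? [<-|?]; auto | auto].
Qed.

Lemma ren_ext t : forall xi zeta, (forall n, xi n = zeta n) -> ren xi t = ren zeta t.
Proof.
  induction t using term_ind_list; intros xi zeta E; simpl; f_equal; auto.
  - apply IHt2. intros [|n]; simpl; auto.
  - apply map_ext_in; auto.
Qed.

Lemma ren_comp t : forall xi zeta, ren xi (ren zeta t) = ren (fun n => xi (zeta n)) t.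
Proof.
  induction t using term_ind_list; intros xi zeta; simpl; f_equal; auto.
  - rewrite IHt2. apply ren_ext. intros [|n]; reflexivity.
  - rewrite map_map. apply map_ext_in; auto.
Qed.

Lemma subst_ext t : forall s r, (forall n, s n = r n) -> subst s t = subst r t.
Proof.
  induction t using term_ind_list; intros s r E; simpl; f_equal; auto.
  - apply IHt2. intros [|n]; simpl; f_equal; auto.
  - apply map_ext_in; auto.
Qed.

Lemma subst_ren t : forall s xi, subst s (ren xi t) = subst (fun n => s (xi n)) t.
Proof.
  induction t using term_ind_list; intros s xi; simpl; f_equal; auto.
  - rewrite IHt2. apply subst_ext. intros [|n]; reflexivity.
  - rewrite map_map. apply map_ext_in; auto.
Qed.

Lemma ren_subst t : forall s xi, ren xi (subst s t) = subst (fun n => ren xi (s n)) t.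
Proof.
  induction t using term_ind_list; intros s xi; simpl; f_equal; auto.
  - rewrite IHt2. apply subst_ext. intros [|n]; simpl; auto.
    unfold lift. rewrite !ren_comp. apply ren_ext. reflexivity.
  - rewrite map_map. apply map_ext_in; auto.
Qed.

Lemma subst_comp t : forall s r, subst r (subst s t) = subst (fun n => subst r (s n)) t.
Proof.
  induction t using term_ind_list; intros s r; simpl; f_equal; auto.
  - rewrite IHt2. apply subst_ext. intros [|n]; simpl; auto.
    unfold lift. rewrite subst_ren, ren_subst. apply subst_ext. reflexivity.
  - rewrite map_map. apply map_ext_in; auto.
Qed.

Lemma ren_as_subst t : forall xi, ren xi t = subst (fun n => Var (xi n)) t.
Proof.
  induction t using term_ind_list; intros xi; simpl; f_equal; auto.
  - rewrite IHt2. apply subst_ext. intros [|n]; reflexivity.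
  - apply map_ext_in; auto.
Qed.

Lemma subst_Var t : subst Var t = t.
Proof.
  induction t using term_ind_list; simpl; f_equal; auto.
  - rewrite <- IHt2 at 2. apply subst_ext. intros [|n]; reflexivity.
  - rewrite <- (map_id Ms) at 2. apply map_ext_in; auto.
Qed.

Lemma subst_ext_scoped t : forall n s r, scoped n t ->
  (forall k, k < n -> s k = r k) -> subst s t = subst r t.
Proof.
  induction t using term_ind_list; intros m s r Hsc E.
  - apply E, Hsc.
  - reflexivity.
  - destruct Hsc as [HA HB]. simpl. f_equal; [eauto|].
    apply (IHt2 (S m)); auto. intros [|k] Hk; simpl; auto. f_equal. apply E. lia.
  - destruct Hsc. simpl. f_equal; eauto.
  - rewrite scoped_Lab in Hsc. simpl. f_equal. apply map_ext_in; eauto.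
Qed.

Lemma lift_lift k t : lift 1 (lift k t) = lift (S k) t.
Proof. unfold lift. rewrite ren_comp. apply ren_ext. reflexivity. Qed.

Lemma subst_up_lift s t : subst (up s) (lift 1 t) = lift 1 (subst s t).
Proof. unfold lift. rewrite subst_ren, ren_subst. apply subst_ext. reflexivity. Qed.

Lemma subst1_lift N k t : subst (subst1 N) (lift (S k) t) = lift k t.
Proof. unfold lift. rewrite subst_ren, ren_as_subst. apply subst_ext. reflexivity. Qed.

Lemma subst_subst1 s N B :
  subst s (subst (subst1 N) B) = subst (subst1 (subst s N)) (subst (up s) B).
Proof.
  rewrite !subst_comp. apply subst_ext. intros [|k]; simpl; auto.
  unfold lift. rewrite subst_ren, <- (subst_Var (s k)) at 1. apply subst_ext. reflexivity.
Qed.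

Lemma subst_inst_rev s Ms k : k < length Ms ->
  subst s (inst_rev Ms k) = inst_rev (map (subst s) Ms) k.
Proof.
  intros Hk. unfold inst_rev. rewrite length_map, <- (map_nth (subst s)).
  apply nth_indep. rewrite length_map. exact Hk.
Qed.

(* Past [length Ms], [inst_rev Ms] shifts indices down, which does not commute with
   [subst s]; hence the scoping hypotheses. *)
Lemma subst_inst_rev_scoped s Ms A : scoped (length Ms) A ->
  subst s (subst (inst_rev Ms) A) = subst (inst_rev (map (subst s) Ms)) A.
Proof.
  intros Hsc. rewrite subst_comp. apply (subst_ext_scoped _ _ _ _ Hsc).
  apply subst_inst_rev.
Qed.

Lemma subst_up_inst_rev_scoped s Ms B : scoped (S (length Ms)) B ->
  subst (up s) (subst (up (inst_rev Ms)) B) = subst (up (inst_rev (map (subst s) Ms))) B.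
Proof.
  intros Hsc. rewrite subst_comp. apply (subst_ext_scoped _ _ _ _ Hsc).
  intros [|k] Hk; simpl; auto.
  rewrite subst_up_lift, subst_inst_rev by lia. reflexivity.
Qed.

Lemma subst_lab_type s Ms A B :
  scoped (length Ms) A -> scoped (S (length Ms)) B ->
  subst s (Pi (subst (inst Ms) A) (subst (up (inst Ms)) B)) =
  Pi (subst (inst (map (subst s) Ms)) A) (subst (up (inst (map (subst s) Ms))) B).
Proof.
  intros HA HB. unfold inst. simpl.
  rewrite subst_inst_rev_scoped, subst_up_inst_rev_scoped, map_rev; rewrite ?length_rev; auto.
Qed.

Definition lookup_incl (D D' : ldelta) : Prop :=
  forall l e, lookup D l = Some e -> lookup D' l = Some e.

Scheme step_mut := Induction for step Sort Prop
  with step_list_mut := Induction for step_list Sort Prop.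

Lemma step_incl D D' : lookup_incl D D' -> forall M M', step D M M' -> step D' M M'.
Proof.
  intros Hincl M M' Hs.
  induction Hs using step_mut with (P0 := fun Ms Ms' _ => step_list D' Ms Ms');
    econstructor; eauto.
Qed.

Lemma red_incl D D' : lookup_incl D D' -> forall M M', red D M M' -> red D' M M'.
Proof.
  intros Hincl M M' Hr. induction Hr; econstructor; eauto using step_incl.
Qed.

Lemma equiv_incl D D' : lookup_incl D D' -> forall M M', equiv D M M' -> equiv D' M M'.
Proof.
  intros Hincl M M' He. induction He.
  - eapply equiv_red; eauto using red_incl.
  - eapply equiv_eta; eauto using red_incl.
  - eapply equiv_eta_sym; eauto using red_incl.
Qed.

Definition bodies_scoped (D : ldelta) : Prop :=
  forall l l' tele A M B, lookup D l = Some (LEntry l' tele A M B) -> scoped (S (length tele)) M.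

Section SubstReduction.

Variable D : ldelta.
Hypothesis HD : bodies_scoped D.

Lemma step_subst M M' : step D M M' -> forall s, step D (subst s M) (subst s M').
Proof.
  intros Hs.
  induction Hs using step_mut with
    (P0 := fun Ms Ms' _ =>
       forall sigma, step_list D (map (subst sigma) Ms) (map (subst sigma) Ms'));
    intros sigma; simpl; try (econstructor; eauto; fail).
  unfold inst_arg. rewrite subst_inst_rev_scoped; simpl.
  - rewrite map_rev. apply step_beta with (tele := tele) (A := A) (B := B); auto.
    rewrite length_map. assumption.
  - rewrite length_rev, e0. eapply HD; eauto.
Qed.

Lemma red_subst M M' : red D M M' -> forall s, red D (subst s M) (subst s M').
Proof. intros Hr s. induction Hr; econstructor; eauto using step_subst. Qed.

Lemma subst_up_eta_body s Ns tele Nb l A B :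
  lookup D l = Some (LEntry l tele A Nb B) -> length Ns = length tele ->
  subst (up s) (subst (up (inst Ns)) Nb) = subst (up (inst (map (subst s) Ns))) Nb.
Proof.
  intros Hl Hlen. unfold inst. rewrite subst_up_inst_rev_scoped, map_rev; auto.
  rewrite length_rev, Hlen. eapply HD; eauto.
Qed.

Lemma equiv_subst M M' : equiv D M M' -> forall s, equiv D (subst s M) (subst s M').
Proof.
  intros He. induction He; intros s.
  - eapply equiv_red; eauto using red_subst.
  - eapply equiv_eta with (M' := subst s M') (Ns := map (subst s) Ns); eauto.
    + exact (red_subst _ _ H s).
    + apply red_subst; assumption.
    + rewrite length_map; assumption.
    + specialize (IHHe (up s)). simpl in IHHe.
      erewrite subst_up_eta_body, subst_up_lift in IHHe; eauto.
  - eapply equiv_eta_sym with (M' := subst s M') (Ns := map (subst s) Ns); eauto.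
    + exact (red_subst _ _ H s).
    + apply red_subst; assumption.
    + rewrite length_map; assumption.
    + specialize (IHHe (up s)). simpl in IHHe.
      erewrite subst_up_eta_body, subst_up_lift in IHHe; eauto.
Qed.

End SubstReduction.

Scheme typing_mut := Induction for typing Sort Prop
  with wf_mut := Induction for wf Sort Prop
  with args_typed_mut := Induction for args_typed Sort Prop.
Combined Scheme typing_wf_args_mut from typing_mut, wf_mut, args_typed_mut.

Lemma typing_wf D G M A : typing D G M A -> wf D G.
Proof. intros H. induction H; assumption. Qed.

Lemma wf_nil D G : wf D G -> wf D [].
Proof. intros H. induction H; eauto using wf. Qed.

Lemma args_typed_length D G Ms tele : args_typed D G Ms tele -> length Ms = length tele.
Proof. intros H. induction H; simpl; auto. Qed.

Fixpoint ctx_scoped (G : list term) : Prop :=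
  match G with [] => True | A :: G' => scoped (length G') A /\ ctx_scoped G' end.

Lemma typing_scoped :
  (forall D G M A, typing D G M A -> scoped (length G) M) /\
  (forall D G, wf D G -> True) /\
  (forall D G Ms tele, args_typed D G Ms tele -> forall M, In M Ms -> scoped (length G) M).
Proof.
  apply typing_wf_args_mut; intros; simpl in *; auto.
  - apply nth_error_Some. congruence.
  - apply (proj2 (scoped_Lab _ l Ms)). intros M HM.
    apply H0, in_rev. rewrite rev_involutive. exact HM.
  - contradiction.
  - destruct H1 as [<-|]; auto.
Qed.

Lemma wf_ctx_scoped D G : wf D G -> ctx_scoped G.
Proof.
  intros H. induction H; simpl; auto.
  split; [exact (proj1 typing_scoped _ _ _ _ H0) | assumption].
Qed.

Lemma wf_nth_error D G n A : wf D G -> nth_error G n = Some A ->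
  exists i, typing D (skipn (S n) G) A (Univ i).
Proof.
  intros H. revert n. induction H; intros [|n] Hn; simpl in *; try discriminate; eauto.
  injection Hn as <-. eauto.
Qed.

Lemma lookup_declared D l e : lookup D l = Some e -> declared D l.
Proof.
  unfold declared. induction D as [|e0 D IH]; simpl; [discriminate|].
  destruct (Nat.eqb (l_name e0) l) eqn:E; intros H; auto.
  left. apply Nat.eqb_eq, E.
Qed.

Lemma lookup_incl_fresh D e : ~ declared D (l_name e) -> lookup_incl D (e :: D).
Proof.
  intros Hfresh l x Hl. simpl. destruct (Nat.eqb (l_name e) l) eqn:E; auto.
  apply Nat.eqb_eq in E; subst. exfalso. eapply Hfresh, lookup_declared, Hl.
Qed.

Lemma wf_label_fresh e D : wf (e :: D) [] -> ~ declared D (l_name e).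
Proof. intros H. inversion H; subst. assumption. Qed.

Lemma typing_label_weaken e :
  (forall D G M A, typing D G M A -> wf (e :: D) [] -> typing (e :: D) G M A) /\
  (forall D G, wf D G -> wf (e :: D) [] -> wf (e :: D) G) /\
  (forall D G Ms tele, args_typed D G Ms tele -> wf (e :: D) [] ->
     args_typed (e :: D) G Ms tele).
Proof.
  apply typing_wf_args_mut; intros; try assumption; try (econstructor; eauto; fail).
  - eapply ty_conv; eauto.
    eapply equiv_incl; [apply lookup_incl_fresh, wf_label_fresh|]; eauto.
  - eapply ty_lab; eauto.
    eapply lookup_incl_fresh; [apply wf_label_fresh|]; eauto.
Qed.

Lemma wf_lookup_typed D G l l' tele A M B : wf D G ->
  lookup D l = Some (LEntry l' tele A M B) ->
  (exists i, typing D tele (Pi A B) (Univ i)) /\ typing D (A :: tele) M B.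
Proof.
  intros HG. pose proof (wf_nil _ _ HG) as Hw. clear G HG.
  induction D as [|e D IH]; intros Hl; [discriminate|].
  assert (Hweaken : forall G N T, typing D G N T -> typing (e :: D) G N T)
    by (intros; apply (proj1 (typing_label_weaken e)); assumption).
  inversion Hw as [|? l0 tele0 A0 M0 B0 i Hfresh HPi HM|]; subst.
  simpl in Hl. destruct (Nat.eqb l0 l).
  - injection Hl as <- <- <- <- <-. eauto.
  - destruct IH as [[j Hj] HM']; eauto using wf_nil, typing_wf.
Qed.

Lemma wf_bodies_scoped D G : wf D G -> bodies_scoped D.
Proof.
  intros HG l l' tele A M B Hl.
  exact (proj1 typing_scoped _ _ _ _ (proj2 (wf_lookup_typed _ _ _ _ _ _ _ _ HG Hl))).
Qed.

Lemma wf_lookup_scoped D G l l' tele A M B : wf D G ->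
  lookup D l = Some (LEntry l' tele A M B) ->
  scoped (length tele) A /\ scoped (S (length tele)) B /\ ctx_scoped tele.
Proof.
  intros HG Hl. destruct (wf_lookup_typed _ _ _ _ _ _ _ _ HG Hl) as [[i Hi] _].
  destruct (proj1 typing_scoped _ _ _ _ Hi) as [HA HB].
  eauto using wf_ctx_scoped, typing_wf.
Qed.

(* Renamings and typed substitutions both satisfy [ctx_map_var] and [ctx_map_up], so a
   single induction serves both; renaming comes first because [ctx_subst_up] needs
   weakening. *)
Section TypingCtxMap.

Variable ctx_map : ldelta -> (nat -> term) -> list term -> list term -> Prop.

Hypothesis ctx_map_var : forall D s G G' n A, ctx_map D s G G' -> wf D G' ->
  nth_error G n = Some A -> typing D G' (s n) (subst s (lift (S n) A)).

Hypothesis ctx_map_up : forall D s G G' X, ctx_map D s G G' -> wf D (subst s X :: G') ->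
  ctx_map D (up s) (X :: G) (subst s X :: G').

Lemma typing_ctx_map :
  (forall D G M T, typing D G M T -> forall s G', ctx_map D s G G' -> wf D G' ->
     typing D G' (subst s M) (subst s T)) /\
  (forall D G, wf D G -> True) /\
  (forall D G Ms tele, args_typed D G Ms tele -> forall s G', ctx_map D s G G' -> wf D G' ->
     ctx_scoped tele -> args_typed D G' (map (subst s) Ms) tele).
Proof.
  apply typing_wf_args_mut; intros; auto.
  - eapply ctx_map_var; eauto.
  - constructor. assumption.
  - specialize (H s G' H1 H2).
    assert (HA : wf D (subst s A :: G')) by (econstructor; eauto).
    econstructor; eauto.
  - rewrite subst_subst1. eapply ty_app; [exact (H s G' H1 H2) | eauto].
  - eapply ty_conv; eauto. eapply equiv_subst; eauto using wf_bodies_scoped.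
  - destruct (wf_lookup_scoped _ _ _ _ _ _ _ _ H2 e) as (HA & HB & Htele).
    pose proof (args_typed_length _ _ _ _ a) as Hlen. rewrite length_rev in Hlen.
    rewrite subst_lab_type by (rewrite Hlen; assumption).
    eapply ty_lab; eauto. rewrite <- map_rev. auto.
  - constructor.
  - destruct H3 as [HA Htele]. simpl. constructor; auto.
    rewrite <- subst_inst_rev_scoped; auto.
    rewrite (args_typed_length _ _ _ _ a). assumption.
Qed.

End TypingCtxMap.

Definition ctx_renaming (s : nat -> term) (G G' : list term) : Prop :=
  forall n A, nth_error G n = Some A -> exists k A',
    s n = Var k /\ nth_error G' k = Some A' /\ subst s (lift (S n) A) = lift (S k) A'.

Lemma ctx_renaming_up s G G' X :
  ctx_renaming s G G' -> ctx_renaming (up s) (X :: G) (subst s X :: G').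
Proof.
  intros Hs [|n] A Hn; simpl in Hn.
  - injection Hn as <-. exists 0, (subst s X). auto using subst_up_lift.
  - destruct (Hs n A Hn) as (k & A' & Hk & HA' & Hlift).
    exists (S k), A'. simpl. rewrite Hk. repeat split; auto.
    rewrite <- lift_lift, subst_up_lift, Hlift. apply lift_lift.
Qed.

Lemma ctx_renaming_shift k G : ctx_renaming (fun n => Var (k + n)) (skipn k G) G.
Proof.
  intros n A Hn. rewrite nth_error_skipn in Hn. exists (k + n), A. repeat split; auto.
  rewrite <- ren_as_subst. unfold lift. rewrite ren_comp. apply ren_ext. intros; simpl; lia.
Qed.

Lemma typing_lift D G k M T : typing D (skipn k G) M T -> wf D G ->
  typing D G (lift k M) (lift k T).
Proof.
  intros H HG. unfold lift. rewrite !ren_as_subst.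
  refine (proj1 (typing_ctx_map (fun _ => ctx_renaming) _ _)
            _ _ _ _ H _ _ (ctx_renaming_shift k G) HG).
  - intros D' s G1 G2 n A Hs HG2 Hn.
    destruct (Hs n A Hn) as (k' & A' & -> & Hk' & ->). constructor; assumption.
  - intros. apply ctx_renaming_up. assumption.
Qed.

Definition ctx_subst (D : ldelta) (s : nat -> term) (G G' : list term) : Prop :=
  forall n A, nth_error G n = Some A -> typing D G' (s n) (subst s (lift (S n) A)).

Lemma ctx_subst_up D s G G' X : ctx_subst D s G G' -> wf D (subst s X :: G') ->
  ctx_subst D (up s) (X :: G) (subst s X :: G').
Proof.
  intros Hs HG' [|n] A Hn; simpl in Hn.
  - injection Hn as <-. rewrite subst_up_lift. constructor; auto.
  - simpl. rewrite <- (lift_lift (S n) A), subst_up_lift.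
    apply (typing_lift _ _ 1); auto.
Qed.

Lemma typing_subst D G G' s M T : typing D G M T -> ctx_subst D s G G' -> wf D G' ->
  typing D G' (subst s M) (subst s T).
Proof.
  intros H Hs HG'.
  exact (proj1 (typing_ctx_map ctx_subst (fun D s G G' n A Hs _ => Hs n A) ctx_subst_up)
           _ _ _ _ H _ _ Hs HG').
Qed.

Lemma ctx_subst_subst1 D G N A : typing D G N A -> ctx_subst D (subst1 N) (A :: G) G.
Proof.
  intros HN [|n] X Hn; simpl in Hn; rewrite subst1_lift.
  - injection Hn as <-. unfold lift. rewrite ren_as_subst, subst_Var. exact HN.
  - constructor; eauto using typing_wf.
Qed.

Lemma args_ctx_subst D G Ms tele : args_typed D G Ms tele -> ctx_subst D (inst_rev Ms) tele G.
Proof.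
  intros H. induction H as [|D G M Ms A tele Hargs IH HM]; intros n X Hn.
  - destruct n; discriminate.
  - destruct n as [|n]; simpl in Hn.
    + injection Hn as <-. unfold lift. rewrite subst_ren. exact HM.
    + rewrite <- (lift_lift (S n) X). unfold lift at 1. rewrite subst_ren.
      exact (IH n X Hn).
Qed.

Lemma typing_Pi_inv D G A B T : typing D G (Pi A B) T ->
  exists i j, typing D G A (Univ i) /\ typing D (A :: G) B (Univ j).
Proof.
  intros H. remember (Pi A B) as P. induction H; try discriminate; subst; eauto.
  injection HeqP as <- <-. eauto.
Qed.

Lemma typing_validity D G M T : typing D G M T -> exists i, typing D G T (Univ i).
Proof.
  intros H. induction H.
  - destruct (wf_nth_error _ _ _ _ H H0) as [i Hi]. exists i.
    exact (typing_lift _ _ _ _ _ Hi H).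
  - exists (S (S i)). constructor. assumption.
  - exists (S (Nat.max i j)). constructor. eapply typing_wf; eauto.
  - destruct IHtyping1 as [k Hk]. destruct (typing_Pi_inv _ _ _ _ _ Hk) as (i & j & HA & HB).
    exists j.
    exact (typing_subst _ _ _ _ _ _ HB (ctx_subst_subst1 _ _ _ _ H0) (typing_wf _ _ _ _ H0)).
  - exists i. assumption.
  - destruct (wf_lookup_typed _ _ _ _ _ _ _ _ H H0) as [[i Hi] _]. exists i.
    exact (typing_subst _ _ _ _ _ _ Hi (args_ctx_subst _ _ _ _ H1) H).
Qed.

Theorem lemma3p2 (D : ldelta) (G : list term) (M C : term)
    (l : nat) (tele : list term) (A N B : term) :
  typing D G M C ->
  typing D (A :: tele) N B ->
  ~ declared D l ->
  typing (LEntry l tele A N B :: D) G M C.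
Proof.
  intros HM HN Hfresh.
  destruct (typing_validity _ _ _ _ HN) as [j HB].
  pose proof (typing_wf _ _ _ _ HN) as Hwf.
  inversion Hwf as [| |? ? ? i Htele HA]; subst.
  assert (Hext : wf (LEntry l tele A N B :: D) []) by (eapply wf_label; eauto using ty_pi).
  exact (proj1 (typing_label_weaken _) _ _ _ _ HM Hext).
Qed.
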